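(* Let $n\ge 3$, and let $\Omega_n$, the perimeter $p:\Omega_n\to\mathbb{R}$, the area $\mathcal A:\Omega_n\to\mathbb{R}$ and $\Psi=(p,\mathcal A):\Omega_n\to\mathbb{R}^2$ be as in the context. Then: (1) $p$ and $\mathcal A$ are submersions on $\Omega_n$; hence the level sets of $p$ (resp. of $\mathcal A$) are the leaves of a codimension $1$ foliation $\mathcal F_p$ (resp. $\mathcal F_a$) on $\Omega_n$. (2) For $\omega\in\Omega_n$, the differential $d\Psi(\omega)$ has rank $2$ if the polygon associated with $\omega$ is not regular, and rank $1$ if it is regular. Consequently $\Psi$ defines a codimension $2$ foliation $\mathcal F$ on the open subset of $\Omega_n$ consisting of the $\omega$ whose associated polygon is not regular, whose leaves are the level sets of $\Psi$ there.
   Context: Let $\mathcal V=\{(x,y,z)\in\mathbb{R}^3: 0<x<y+z,\ 0<y<x+z,\ 0<z<x+y\}$. For $(t,x,s)\in\mathcal V$ let $\alpha(t,x,s)=\arccos\frac{t^2+s^2-x^2}{2ts}\in\,]0,\pi[$ (the angle opposite the side $x$ in a triangle with sides $t,x,s$). Let $$\Omega_n=\Big\{\omega=(t_1,x_1,t_2,x_2,\dots,t_{n-2},x_{n-2},t_{n-1})\in(\mathbb{R}_{>0})^{2n-3}:\ (t_k,x_k,t_{k+1})\in\mathcal V \ (1\le k\le n-2),\ \sum_{k=1}^{n-2}\alpha(t_k,x_k,t_{k+1})<2\pi\Big\}.$$ To $\omega$ associate the planar polygon $(M_1,\dots,M_n)$ with $M_n=O$, $M_k=t_k(\cos\theta_k,\sin\theta_k)$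 ($1\le k\le n-1$), $\theta_1=0$, $\theta_{k+1}=\theta_k+\alpha(t_k,x_k,t_{k+1})$; so $t_k=M_nM_k$, $x_k=M_kM_{k+1}$, the side lengths are $t_1,x_1,\dots,x_{n-2},t_{n-1}$ (the polygon is star-shaped with respect to $M_n$). Perimeter: $p(\omega)=t_1+x_1+x_2+\dots+x_{n-2}+t_{n-1}$. Area: $\mathcal A(\omega)=\sum_{k=1}^{n-2}\frac14\sqrt{f(t_k,x_k,t_{k+1})}$ with $f(x,y,z)=(x+y+z)(-x+y+z)(x-y+z)(x+y-z)$ (Heron's formula for the triangles $M_nM_kM_{k+1}$). A polygon is equilateral if all its sides have the same length, inscribable if all its vertices lie on a common circle, and regular if it is both. *)

From HB Require Import structures.
From mathcomp Require Import all_boot all_order all_algebra.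
From mathcomp Require Import all_classical all_reals all_analysis.
Set Implicit Arguments. Unset Strict Implicit. Unset Printing Implicit Defensive.
Import Order.TTheory GRing.Theory Num.Theory.
Import numFieldNormedType.Exports.
Local Open Scope classical_set_scope.
Local Open Scope ring_scope.

Section Polygons.
Variable R : realType.

Definition inV (x y z : R) : Prop :=
  (0 < x /\ x < y + z) /\ (0 < y /\ y < x + z) /\ (0 < z /\ z < x + y).

Definition alpha (t x s : R) : R := acos ((t ^+ 2 + s ^+ 2 - x ^+ 2) / (2 * t * s)).

Definition heron (x y z : R) : R :=
  (x + y + z) * (- x + y + z) * (x - y + z) * (x + y - z).

(* k-th coordinate (0-based) of a row vector, 0 if out of range *)
Definition coord m (w : 'rV[R]_m) (k : nat) : R :=
  match @insub nat (fun i => (i < m)%N) 'I_m k with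
  | Some i => w ord0 i
  | None => 0
  end.

(* omega = (t_1, x_1, ..., x_{n-2}, t_{n-1}); with 0-based indices
   tt w k = t_{k+1} = coordinate 2k,  xx w k = x_{k+1} = coordinate 2k+1 *)
Definition tt m (w : 'rV[R]_m) (k : nat) : R := coord w (2 * k).
Definition xx m (w : 'rV[R]_m) (k : nat) : R := coord w (2 * k).+1.

Definition Omega (n : nat) (w : 'rV[R]_(2 * n - 3)) : Prop :=
  (forall i, 0 < w ord0 i) /\
  (forall k, (k < n - 2)%N -> inV (tt w k) (xx w k) (tt w k.+1)) /\
  \sum_(k < n - 2) alpha (tt w k) (xx w k) (tt w k.+1) < 2 * pi.

Definition perim (n : nat) (w : 'rV[R]_(2 * n - 3)) : R :=
  tt w 0 + \sum_(k < n - 2) xx w k + tt w (n - 2).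

(* area, sum of Heron areas of the triangles M_n M_k M_{k+1} *)
Definition area (n : nat) (w : 'rV[R]_(2 * n - 3)) : R :=
  \sum_(k < n - 2) (Num.sqrt (heron (tt w k) (xx w k) (tt w k.+1)) / 4).

Definition Psi (n : nat) (w : 'rV[R]_(2 * n - 3)) : 'rV[R]_2 :=
  \row_(i < 2) (if i == ord0 then perim w else area w).

(* theta_{k+1} (0-based k): theta_1 = 0, theta_{k+1} = theta_k + alpha_k *)
Definition theta m (w : 'rV[R]_m) (k : nat) : R :=
  \sum_(j < k) alpha (tt w j) (xx w j) (tt w j.+1).

(* vertices: vertex k = M_{k+1} for k < n-1, and vertex (n-1) = M_n = O *)
Definition vertex (n : nat) (w : 'rV[R]_(2 * n - 3)) (k : 'I_n) : R * R :=
  if (k < n - 1)%N then (tt w k * cos (theta w k), tt w k * sin (theta w k))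
  else (0, 0).

(* the sides have lengths t_1, x_1, ..., x_{n-2}, t_{n-1} *)
Definition equilateral (n : nat) (w : 'rV[R]_(2 * n - 3)) : Prop :=
  (forall k, (k < n - 2)%N -> xx w k = tt w 0) /\ tt w (n - 2) = tt w 0.

Definition inscribable (n : nat) (w : 'rV[R]_(2 * n - 3)) : Prop :=
  exists (c : R * R) (r : R), forall k : 'I_n,
    ((vertex w k).1 - c.1) ^+ 2 + ((vertex w k).2 - c.2) ^+ 2 = r ^+ 2.

Definition regular (n : nat) (w : 'rV[R]_(2 * n - 3)) : Prop :=
  equilateral w /\ inscribable w.

End Polygons.

From Pilot Require Import Defs.
From HB Require Import structures.
From mathcomp Require Import all_boot all_order all_algebra.
From mathcomp Require Import all_classical all_reals all_analysis.
From mathcomp Require Import ring lra zify.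
Set Implicit Arguments. Unset Strict Implicit. Unset Printing Implicit Defensive.
Import Order.TTheory GRing.Theory Num.Theory.
Import numFieldNormedType.Exports.
Local Open Scope classical_set_scope.
Local Open Scope ring_scope.

(* The perimeter is linear with partial derivative 1 in every [x_k], and the
   area has a nonzero partial derivative in [t_1] or [x_1], so both are
   submersions.  The partial derivative of the area of a triangle in one of its
   sides is the signed distance from its circumcentre to that side.  Hence
   [dA = lambda dp], i.e. [rank dPsi = 1], iff consecutive triangles
   [O M_k M_(k+1)] have the same circumcentre (the polygon is inscribed) and
   all sides are at the same distance [lambda] from it (the polygon is
   equilateral).  Conversely, the vertices of a regular polygon are the
   successive images of [O] under one rotation about the centre, and the
   inscribed angle theorem shows that every side is at the same distance from
   it.  Being non-critical is an open condition on the continuous partial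
   derivatives, so the non-regular configurations form an open set. *)

Section CircleThroughOrigin.
Variable R : realFieldType.

Definition cross (a1 b1 a2 b2 : R) := a1 * b2 - b1 * a2.

(* [(a - c1)^2 + (b - c2)^2 = c1^2 + c2^2], expanded *)
Definition on_circle0 (c1 c2 a b : R) := 2 * (a * c1 + b * c2) = a ^+ 2 + b ^+ 2.

Definition circum1 (a1 b1 a2 b2 : R) :=
  ((a1 ^+ 2 + b1 ^+ 2) * b2 - (a2 ^+ 2 + b2 ^+ 2) * b1) / (2 * cross a1 b1 a2 b2).
Definition circum2 (a1 b1 a2 b2 : R) :=
  (a1 * (a2 ^+ 2 + b2 ^+ 2) - a2 * (a1 ^+ 2 + b1 ^+ 2)) / (2 * cross a1 b1 a2 b2).

Lemma on_circle0_circum (a1 b1 a2 b2 : R) : cross a1 b1 a2 b2 != 0 ->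
  on_circle0 (circum1 a1 b1 a2 b2) (circum2 a1 b1 a2 b2) a1 b1 /\
  on_circle0 (circum1 a1 b1 a2 b2) (circum2 a1 b1 a2 b2) a2 b2.
Proof. by rewrite /on_circle0 /circum1 /circum2 /cross => h; split; field. Qed.

Section TwoPoints.
Variables a1 b1 a2 b2 c1 c2 : R.
Hypothesis P12 : cross a1 b1 a2 b2 != 0.
Hypotheses (on1 : on_circle0 c1 c2 a1 b1) (on2 : on_circle0 c1 c2 a2 b2).

Lemma circumE : c1 = circum1 a1 b1 a2 b2 /\ c2 = circum2 a1 b1 a2 b2.
Proof.
move: on1 on2 P12; rewrite /on_circle0 /circum1 /circum2 /cross => e1 e2 h.
split.
  have <- : 2 * (a1 * b2 - b1 * a2) * c1 =
    (a1 ^+ 2 + b1 ^+ 2) * b2 - (a2 ^+ 2 + b2 ^+ 2) * b1 by rewrite -e1 -e2; ring.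
  by field.
have <- : 2 * (a1 * b2 - b1 * a2) * c2 =
  a1 * (a2 ^+ 2 + b2 ^+ 2) - a2 * (a1 ^+ 2 + b1 ^+ 2) by rewrite -e1 -e2; ring.
by field.
Qed.

Lemma on_circle0_defect a3 b3 : cross a2 b2 a3 b3 != 0 ->
  ((a1 * (a1 - a2) + b1 * (b1 - b2)) / cross a1 b1 a2 b2 +
   (a3 * (a3 - a2) + b3 * (b3 - b2)) / cross a2 b2 a3 b3) * cross a2 b2 a3 b3
  = a3 ^+ 2 + b3 ^+ 2 - 2 * (a3 * c1 + b3 * c2).
Proof.
move=> P23; have [-> ->] := circumE.
by move: P12 P23; rewrite /circum1 /circum2 /cross => h1 h2; field; rewrite h1 h2.
Qed.

(* A chord of length [l] lies at distance [d] from the centre with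
   [l^2 = 4 (rho^2 - d^2)]; below, [d] is [l / 2] times the cotangent of the
   angle opposite the chord in the triangle [O, (a1, b1), (a2, b2)]. *)
Lemma chord_opposite_origin x : x ^+ 2 = (a1 - a2) ^+ 2 + (b1 - b2) ^+ 2 ->
  x ^+ 2 = 4 * (c1 ^+ 2 + c2 ^+ 2 -
    (x * (a1 * a2 + b1 * b2) / (2 * cross a1 b1 a2 b2)) ^+ 2).
Proof.
move=> ex; have [-> ->] := circumE; move: P12.
by rewrite /circum1 /circum2 /cross => h; rewrite !expr_div_n !exprMn ex; field; rewrite h.
Qed.

Lemma chord_first t : t ^+ 2 = a1 ^+ 2 + b1 ^+ 2 ->
  t ^+ 2 = 4 * (c1 ^+ 2 + c2 ^+ 2 -
    (t * (a2 * (a2 - a1) + b2 * (b2 - b1)) / (2 * cross a1 b1 a2 b2)) ^+ 2).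
Proof.
move=> et; have [-> ->] := circumE; move: P12.
by rewrite /circum1 /circum2 /cross => h; rewrite !expr_div_n !exprMn et; field; rewrite h.
Qed.

Lemma chord_second t : t ^+ 2 = a2 ^+ 2 + b2 ^+ 2 ->
  t ^+ 2 = 4 * (c1 ^+ 2 + c2 ^+ 2 -
    (t * (a1 * (a1 - a2) + b1 * (b1 - b2)) / (2 * cross a1 b1 a2 b2)) ^+ 2).
Proof.
move=> et; have [-> ->] := circumE; move: P12.
by rewrite /circum1 /circum2 /cross => h; rewrite !expr_div_n !exprMn et; field; rewrite h.
Qed.

End TwoPoints.

Lemma rotation_onto (v1 v2 w1 w2 : R) :
  v1 ^+ 2 + v2 ^+ 2 != 0 -> v1 ^+ 2 + v2 ^+ 2 = w1 ^+ 2 + w2 ^+ 2 ->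
  let p := (v1 * w1 + v2 * w2) / (v1 ^+ 2 + v2 ^+ 2) in
  let q := (v1 * w2 - v2 * w1) / (v1 ^+ 2 + v2 ^+ 2) in
  p ^+ 2 + q ^+ 2 = 1 /\ w1 = p * v1 - q * v2 /\ w2 = q * v1 + p * v2.
Proof.
move=> v0 vw p q; split; last by split; rewrite /p /q; field.
rewrite /p /q !expr_div_n -mulrDl.
have -> : (v1 * w1 + v2 * w2) ^+ 2 + (v1 * w2 - v2 * w1) ^+ 2 =
  (v1 ^+ 2 + v2 ^+ 2) * (w1 ^+ 2 + w2 ^+ 2) by ring.
by rewrite -vw -expr2 divff // expf_neq0.
Qed.

Section Rotations.
Variables p q : R.
Hypothesis pq1 : p ^+ 2 + q ^+ 2 = 1.

Lemma rotationK v1 v2 :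
  p * (p * v1 - q * v2) + q * (q * v1 + p * v2) = v1 /\
  - q * (p * v1 - q * v2) + p * (q * v1 + p * v2) = v2.
Proof.
split; [transitivity ((p ^+ 2 + q ^+ 2) * v1) | transitivity ((p ^+ 2 + q ^+ 2) * v2)];
  by [ring | rewrite pq1 mul1r].
Qed.

Lemma rotation_equal_chord v1 v2 w1 w2 :
  v1 ^+ 2 + v2 ^+ 2 != 0 -> v1 ^+ 2 + v2 ^+ 2 = w1 ^+ 2 + w2 ^+ 2 ->
  (w1 - v1) ^+ 2 + (w2 - v2) ^+ 2 =
    (p * v1 - q * v2 - v1) ^+ 2 + (q * v1 + p * v2 - v2) ^+ 2 ->
  (w1 = p * v1 - q * v2 /\ w2 = q * v1 + p * v2) \/
  (w1 = p * v1 + q * v2 /\ w2 = - q * v1 + p * v2).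
Proof.
move=> v0 vw dvw; have [ab1 [ew1 ew2]] := rotation_onto v0 vw.
set r := v1 ^+ 2 + v2 ^+ 2 in v0 vw ab1 ew1 ew2.
set a := (v1 * w1 + v2 * w2) / r in ab1 ew1 ew2.
set b := (v1 * w2 - v2 * w1) / r in ab1 ew1 ew2.
have ap : a = p.
  apply: (mulfI v0); rewrite /a mulrC divfK //.
  have e2 : (2 : R) != 0 by rewrite pnatr_eq0.
  apply: (mulIf e2).
  have -> : (v1 * w1 + v2 * w2) * 2 = r + (w1 ^+ 2 + w2 ^+ 2) -
    ((w1 - v1) ^+ 2 + (w2 - v2) ^+ 2) by rewrite /r; ring.
  rewrite dvw -vw.
  have -> : (p * v1 - q * v2 - v1) ^+ 2 + (q * v1 + p * v2 - v2) ^+ 2 =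
    r * (p ^+ 2 + q ^+ 2) - 2 * p * r + r by rewrite /r; ring.
  by rewrite pq1; ring.
have /eqP : b ^+ 2 = q ^+ 2 by move: pq1 ab1; rewrite -ap; lra.
rewrite -subr_eq0 subr_sqr mulf_eq0 => /orP[] /eqP hb.
  by left; rewrite ew1 ew2 ap (_ : b = q) //; lra.
by right; rewrite ew1 ew2 ap (_ : b = - q); [split; ring | lra].
Qed.

(* Inscribed angle theorem: if [O], [A = c + u] and [B = c + rot u] lie on the
   circle of centre [c], where [rot] is the rotation of cosine [p] and sine [q],
   then [cot (AOB) = q / (1 - p)]. *)
Lemma inscribed_angle c1 c2 u1 u2 A1 A2 B1 B2 : c1 ^+ 2 + c2 ^+ 2 = u1 ^+ 2 + u2 ^+ 2 ->
  A1 = c1 + u1 -> A2 = c2 + u2 ->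
  B1 = c1 + (p * u1 - q * u2) -> B2 = c2 + (q * u1 + p * u2) ->
  (1 - p) * (A1 * B1 + A2 * B2) = q * (A1 * B2 - A2 * B1).
Proof.
move=> cu -> -> -> ->; apply/eqP; rewrite -subr_eq0; apply/eqP.
transitivity ((1 - p) * (c1 ^+ 2 + c2 ^+ 2 - (u1 ^+ 2 + u2 ^+ 2)) +
  (c1 * u1 + c2 * u2 + (u1 ^+ 2 + u2 ^+ 2)) * (1 - (p ^+ 2 + q ^+ 2))); first by ring.
by rewrite pq1 cu; ring.
Qed.

End Rotations.

End CircleThroughOrigin.

Section Triangle.
Variable R : realType.
Implicit Types t x s : R.

Lemma heron_gt0 t x s : inV t x s -> 0 < heron t x s.
Proof.
move=> [[t0 tb] [[x0 xb] [s0 sb]]]; rewrite /heron.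
by rewrite !mulr_gt0 //; lra.
Qed.

Definition cos_law t x s := (t ^+ 2 + s ^+ 2 - x ^+ 2) / (2 * t * s).

Lemma cos_law_bound t x s : inV t x s -> -1 < cos_law t x s < 1.
Proof.
move=> [[t0 tb] [[x0 xb] [s0 sb]]].
have ts0 : 0 < 2 * t * s by rewrite !mulr_gt0.
by rewrite /cos_law ltr_pdivlMr // ltr_pdivrMr //; apply/andP; split; nra.
Qed.

Lemma cos_alpha t x s : inV t x s -> cos (alpha t x s) = cos_law t x s.
Proof.
move=> /cos_law_bound /andP[lo hi].
by rewrite /alpha acosK // in_itv /=; apply/andP; split; apply: ltW.
Qed.

Lemma sin_alpha t x s : inV t x s -> t * s * sin (alpha t x s) = Num.sqrt (heron t x s) / 2.
Proof.
move=> h; have /andP[lo hi] := cos_law_bound h.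
have hH := heron_gt0 h; move: h => [[t0 _] [_ [s0 _]]].
have ts0 : 0 < 2 * t * s by rewrite !mulr_gt0.
rewrite /alpha sin_acos -/(cos_law t x s); last by apply/andP; split; apply: ltW.
have -> : 1 - cos_law t x s ^+ 2 = (Num.sqrt (heron t x s) / (2 * t * s)) ^+ 2.
  rewrite /cos_law !expr_div_n sqr_sqrtr ?(ltW hH) // /heron.
  by field; rewrite !lt0r_neq0.
rewrite sqrtr_sqr ger0_norm ?divr_ge0 ?sqrtr_ge0 ?ltW //.
by field; rewrite !lt0r_neq0.
Qed.

End Triangle.

Section Vertices.
Variables (R : realType) (m : nat) (w : 'rV[R]_m).

(* [(Mx w k, My w k)] is the vertex [M_(k+1)] of the polygon. *)
Definition Mx k := tt w k * cos (theta w k).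
Definition My k := tt w k * sin (theta w k).
Definition crossM k := cross (Mx k) (My k) (Mx k.+1) (My k.+1).

Lemma thetaS k : theta w k.+1 = theta w k + alpha (tt w k) (xx w k) (tt w k.+1).
Proof. by rewrite /theta big_ord_recr. Qed.

Lemma normM k : Mx k ^+ 2 + My k ^+ 2 = tt w k ^+ 2.
Proof. by rewrite /Mx /My !exprMn -mulrDr cos2Dsin2 mulr1. Qed.

Lemma dotM k : inV (tt w k) (xx w k) (tt w k.+1) ->
  Mx k * Mx k.+1 + My k * My k.+1 = (tt w k ^+ 2 + tt w k.+1 ^+ 2 - xx w k ^+ 2) / 2.
Proof.
move=> h; have [[t0 _] [_ [s0 _]]] := h.
rewrite /Mx /My thetaS cosD sinD.
transitivity (tt w k * tt w k.+1 * cos (alpha (tt w k) (xx w k) (tt w k.+1)) *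
  (cos (theta w k) ^+ 2 + sin (theta w k) ^+ 2)); first by ring.
rewrite cos2Dsin2 mulr1 cos_alpha // /cos_law.
by field; rewrite !lt0r_neq0.
Qed.

Lemma crossME k : inV (tt w k) (xx w k) (tt w k.+1) ->
  crossM k = Num.sqrt (heron (tt w k) (xx w k) (tt w k.+1)) / 2.
Proof.
move=> h; rewrite /crossM /cross /Mx /My thetaS cosD sinD -sin_alpha //.
transitivity (tt w k * tt w k.+1 * sin (alpha (tt w k) (xx w k) (tt w k.+1)) *
  (cos (theta w k) ^+ 2 + sin (theta w k) ^+ 2)); first by ring.
by rewrite cos2Dsin2 mulr1.
Qed.

End Vertices.

Section AreaPartials.
Variables (R : realType) (m : nat) (w : 'rV[R]_m).

Definition sqrt_heron k := Num.sqrt (heron (tt w k) (xx w k) (tt w k.+1)).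

(* Partial derivatives of the area [sqrt_heron k / 4] of the triangle
   [O M_(k+1) M_(k+2)] in its sides [x_(k+1)], [t_(k+1)] and [t_(k+2)]: each is
   the signed distance from the circumcentre of the triangle to that side. *)
Definition dA_x k :=
  xx w k * (tt w k ^+ 2 + tt w k.+1 ^+ 2 - xx w k ^+ 2) / (2 * sqrt_heron k).
Definition dA_l k :=
  tt w k * (xx w k ^+ 2 + tt w k.+1 ^+ 2 - tt w k ^+ 2) / (2 * sqrt_heron k).
Definition dA_r k :=
  tt w k.+1 * (tt w k ^+ 2 + xx w k ^+ 2 - tt w k.+1 ^+ 2) / (2 * sqrt_heron k).

(* [dA(w) = dA_l 0 * dp(w)], read coordinatewise: [p] has partial derivative 1
   in every [x_k] and in [t_1], [t_(n-1)], and 0 in the inner [t_k]. *)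
Definition critical (N : nat) :=
  [/\ forall k, (k < N)%N -> dA_x k = dA_l 0, dA_r N.-1 = dA_l 0 &
      forall k, (0 < k < N)%N -> dA_r k.-1 + dA_l k = 0].

End AreaPartials.

Lemma subn2_gt0 n : (3 <= n)%N -> (0 < n - 2)%N.
Proof. by lia. Qed.

Lemma sqr_pos_inj (R : numDomainType) (u v : R) : 0 < u -> 0 < v -> u ^+ 2 = v ^+ 2 -> u = v.
Proof. by move=> u0 v0 /eqP; rewrite eqrXn2 ?ltW // => /eqP. Qed.

Section OmegaPolygon.
Variables (R : realType) (n : nat).
Hypothesis n3 : (3 <= n)%N.
Variable w : 'rV[R]_(2 * n - 3).
Hypothesis wO : Omega w.

Local Notation N := (n - 2)%N.
Local Notation t := (tt w).
Local Notation x := (xx w).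
Local Notation a := (Mx w).
Local Notation b := (My w).

Lemma Omega_inV k : (k < N)%N -> inV (t k) (x k) (t k.+1).
Proof. by case: wO => _ [+ _]; apply. Qed.

Lemma Omega_tt_gt0 k : (k <= N)%N -> 0 < t k.
Proof.
rewrite leq_eqVlt => /orP[/eqP-> | /Omega_inV [[] //]].
have hN : (N.-1 < N)%N by rewrite ltn_predL subn2_gt0.
by have := Omega_inV hN; rewrite prednK ?subn2_gt0 // => -[_ [_ []]].
Qed.

Lemma Omega_xx_gt0 k : (k < N)%N -> 0 < x k.
Proof. by case/Omega_inV=> _ [[]]. Qed.

Lemma sqrt_heron_gt0 k : (k < N)%N -> 0 < sqrt_heron w k.
Proof. by move=> hk; rewrite sqrtr_gt0 (heron_gt0 (Omega_inV hk)). Qed.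

Lemma crossM_gt0 k : (k < N)%N -> 0 < crossM w k.
Proof.
move=> hk; rewrite (crossME (Omega_inV hk)) divr_gt0 // sqrtr_gt0.
exact: heron_gt0 (Omega_inV hk).
Qed.

Lemma crossM_neq0 k : (k < N)%N -> crossM w k != 0.
Proof. by move=> /crossM_gt0 /lt0r_neq0. Qed.

Lemma sides_vertices k : (k < N)%N ->
  [/\ t k ^+ 2 = a k ^+ 2 + b k ^+ 2, t k.+1 ^+ 2 = a k.+1 ^+ 2 + b k.+1 ^+ 2,
      x k ^+ 2 = (a k - a k.+1) ^+ 2 + (b k - b k.+1) ^+ 2 &
      sqrt_heron w k = 2 * crossM w k].
Proof.
move=> hk; have hd := dotM (Omega_inV hk).
rewrite !normM (crossME (Omega_inV hk)); split => //; last by rewrite /sqrt_heron; field.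
have -> : (a k - a k.+1) ^+ 2 + (b k - b k.+1) ^+ 2 = (a k ^+ 2 + b k ^+ 2) +
  (a k.+1 ^+ 2 + b k.+1 ^+ 2) - 2 * (a k * a k.+1 + b k * b k.+1) by ring.
by rewrite hd !normM; field.
Qed.

Lemma dA_xE k : (k < N)%N ->
  dA_x w k = x k * (a k * a k.+1 + b k * b k.+1) / (2 * crossM w k).
Proof.
move=> hk; rewrite /dA_x; have [-> -> -> ->] := sides_vertices hk.
by field; rewrite crossM_neq0.
Qed.

Lemma dA_lE k : (k < N)%N ->
  dA_l w k = t k * (a k.+1 * (a k.+1 - a k) + b k.+1 * (b k.+1 - b k)) / (2 * crossM w k).
Proof.
move=> hk; rewrite /dA_l; have [-> -> -> ->] := sides_vertices hk.
by field; rewrite crossM_neq0.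
Qed.

Lemma dA_rE k : (k < N)%N ->
  dA_r w k = t k.+1 * (a k * (a k - a k.+1) + b k * (b k - b k.+1)) / (2 * crossM w k).
Proof.
move=> hk; rewrite /dA_r; have [-> -> -> ->] := sides_vertices hk.
by field; rewrite crossM_neq0.
Qed.

Lemma dA_l_or_dA_x_neq0 : dA_l w 0 != 0 \/ dA_x w 0 != 0.
Proof.
have N0 := subn2_gt0 n3; have t0 := Omega_tt_gt0 (leq0n N); have t1 := Omega_tt_gt0 N0.
have x0 := Omega_xx_gt0 N0; have S0 := sqrt_heron_gt0 N0.
have e0 : x 0 ^+ 2 + t 1 ^+ 2 - t 0 ^+ 2 = dA_l w 0 * (2 * sqrt_heron w 0) / t 0.
  by rewrite /dA_l; field; rewrite !lt0r_neq0.
have e1 : t 0 ^+ 2 + t 1 ^+ 2 - x 0 ^+ 2 = dA_x w 0 * (2 * sqrt_heron w 0) / x 0.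
  by rewrite /dA_x; field; rewrite !lt0r_neq0.
have [l0|] := eqVneq (dA_l w 0) 0; [right | by left].
by apply/eqP => x00; move: e0 e1; rewrite l0 x00 !mul0r; nra.
Qed.

(* Triangles [k] and [k + 1] share the side [t_(k+2)]; the sum of the signed
   distances from their circumcentres to it vanishes iff the circumcentres
   coincide, i.e. iff [M_(k+3)] lies on the circumcircle of triangle [k]. *)
Lemma dA_r_dA_l_defect k c1 c2 : (k.+1 < N)%N ->
  on_circle0 c1 c2 (a k) (b k) -> on_circle0 c1 c2 (a k.+1) (b k.+1) ->
  (dA_r w k + dA_l w k.+1) * (2 * crossM w k.+1) =
  t k.+1 * (a k.+2 ^+ 2 + b k.+2 ^+ 2 - 2 * (a k.+2 * c1 + b k.+2 * c2)).
Proof.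
move=> hk on0 on1; have hk' : (k < N)%N by apply: ltn_trans hk.
rewrite -(on_circle0_defect (crossM_neq0 hk') on0 on1 (crossM_neq0 hk)).
rewrite dA_rE // dA_lE // -!/(crossM _ _).
by field; rewrite !crossM_neq0.
Qed.

Section CriticalRegular.
Hypothesis wC : critical w N.
Let c1 := circum1 (a 0) (b 0) (a 1) (b 1).
Let c2 := circum2 (a 0) (b 0) (a 1) (b 1).

Lemma critical_on_circle k : (k <= N)%N -> on_circle0 c1 c2 (a k) (b k).
Proof.
have N0 := subn2_gt0 n3.
suff two j : (j < N)%N -> on_circle0 c1 c2 (a j) (b j) /\ on_circle0 c1 c2 (a j.+1) (b j.+1).
  rewrite leq_eqVlt => /orP[/eqP-> | /two[] //].
  by rewrite -(prednK N0); apply: (two _ _).2; rewrite ltn_predL.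
elim: j => [_ | j IH hj]; first exact: on_circle0_circum (crossM_neq0 N0).
have [onj onj1] := IH (ltnW hj); split => //.
have := dA_r_dA_l_defect hj onj onj1.
case: wC => _ _ /(_ j.+1) -> //; rewrite mul0r => /esym/eqP.
rewrite mulf_eq0 (gt_eqF (Omega_tt_gt0 (ltnW hj))) /= subr_eq0 => /eqP.
by rewrite /on_circle0 => ->.
Qed.

(* Every side is a chord at distance [dA_l w 0] from the common circumcentre. *)
Lemma critical_equilateral : equilateral w.
Proof.
have N0 := subn2_gt0 n3; have on := critical_on_circle.
have [t0 _ _ _] := sides_vertices N0.
have := chord_first (crossM_neq0 N0) (on _ (leq0n _)) (on 1%N N0) t0.
rewrite -/(crossM w 0) -dA_lE // => ht0.
case: wC => hx hN _; split.
  move=> k hk; have [_ _ xk _] := sides_vertices hk.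
  have := chord_opposite_origin (crossM_neq0 hk) (on _ (ltnW hk)) (on _ hk) xk.
  rewrite -/(crossM w k) -dA_xE // hx // -ht0.
  by apply: sqr_pos_inj; [exact: Omega_xx_gt0 | exact: Omega_tt_gt0].
have hN1 : (N.-1 < N)%N by rewrite ltn_predL.
have [_ tN _ _] := sides_vertices hN1.
have := chord_second (crossM_neq0 hN1) (on _ (ltnW hN1)) (on _ hN1) tN.
rewrite -/(crossM w _) -dA_rE // hN (prednK N0) -ht0.
by apply: sqr_pos_inj; exact: Omega_tt_gt0.
Qed.

Lemma critical_inscribable : inscribable w.
Proof.
exists (c1, c2), (Num.sqrt (c1 ^+ 2 + c2 ^+ 2)) => k.
rewrite sqr_sqrtr ?addr_ge0 ?sqr_ge0 // /vertex.
case: ifP => [hk | _] /=; last by ring.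
have /critical_on_circle : (k <= N)%N by lia.
by rewrite /on_circle0 /Mx /My; lra.
Qed.

End CriticalRegular.

Section RegularCritical.
Hypothesis we : equilateral w.
Variables c1 c2 r : R.
Hypothesis wc : forall k : 'I_n,
  ((vertex w k).1 - c1) ^+ 2 + ((vertex w k).2 - c2) ^+ 2 = r ^+ 2.

Local Notation s := (t 0).
Let rho2 := c1 ^+ 2 + c2 ^+ 2.

Lemma regular_on_circle k : (k <= N)%N -> (a k - c1) ^+ 2 + (b k - c2) ^+ 2 = rho2.
Proof.
move=> hk; have k_lt : (k < n)%N by lia.
have last_lt : (n.-1 < n)%N by lia.
have := wc (Ordinal last_lt); rewrite /vertex /= ifF; last by lia.
have := wc (Ordinal k_lt); rewrite /vertex /= ifT; last by lia.
by move=> -> <-; rewrite /rho2; ring.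
Qed.

Lemma vertex_not_origin k : (k <= N)%N -> a k = 0 -> b k = 0 -> False.
Proof. by move=> /Omega_tt_gt0 tk a0 b0; have := normM w k; rewrite a0 b0; nra. Qed.

Lemma rho2_neq0 : rho2 != 0.
Proof.
apply/eqP => h0; have [c10 c20] : c1 = 0 /\ c2 = 0 by move: h0; rewrite /rho2; split; nra.
have := regular_on_circle (leq0n N); rewrite c10 c20 !subr0 -/rho2 h0 => ab0.
by apply: (vertex_not_origin (leq0n N)); nra.
Qed.

(* [(Ux j, Uy j)] is [M_j - c], with [M_0 = O]. *)
Definition Ux j := if j is j'.+1 then a j' - c1 else - c1.
Definition Uy j := if j is j'.+1 then b j' - c2 else - c2.

Lemma normU j : (j <= N.+1)%N -> Ux j ^+ 2 + Uy j ^+ 2 = rho2.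
Proof. by case: j => [|j] hj /=; [rewrite /rho2; ring | rewrite regular_on_circle]. Qed.

Lemma sideU j : (j <= N)%N -> (Ux j.+1 - Ux j) ^+ 2 + (Uy j.+1 - Uy j) ^+ 2 = s ^+ 2.
Proof.
case: j => [|j] hj /=; first by rewrite -normM; ring.
have [_ _ xj _] := sides_vertices hj; have [xs _] := we.
by rewrite -(xs j hj) xj; ring.
Qed.

Lemma regular_on_circle0 k : (k <= N)%N -> on_circle0 c1 c2 (a k) (b k).
Proof. by move=> /regular_on_circle; rewrite /on_circle0 /rho2 => h; lra. Qed.

(* cosine and sine of the rotation about [c] taking [O] to [M_1] *)
Let p := (Ux 0 * Ux 1 + Uy 0 * Uy 1) / (Ux 0 ^+ 2 + Uy 0 ^+ 2).
Let q := (Ux 0 * Uy 1 - Uy 0 * Ux 1) / (Ux 0 ^+ 2 + Uy 0 ^+ 2).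

Lemma rotation_pq :
  p ^+ 2 + q ^+ 2 = 1 /\ Ux 1 = p * Ux 0 - q * Uy 0 /\ Uy 1 = q * Ux 0 + p * Uy 0.
Proof. by apply: rotation_onto; rewrite !normU // rho2_neq0. Qed.

Lemma rotation_chord v1 v2 : v1 ^+ 2 + v2 ^+ 2 = rho2 ->
  (p * v1 - q * v2 - v1) ^+ 2 + (q * v1 + p * v2 - v2) ^+ 2 = s ^+ 2.
Proof.
move=> hv; have [pq1 [e1 e2]] := rotation_pq.
rewrite -(sideU (leq0n N)) e1 e2.
transitivity (rho2 * (p ^+ 2 + q ^+ 2 - 2 * p + 1)); first by rewrite -hv; ring.
by rewrite -(normU (leq0n _)); ring.
Qed.

Lemma rotation_nontrivial : 1 - p != 0.
Proof.
apply/eqP => p1; have [pq1 [e1 e2]] := rotation_pq.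
have hp : p = 1 by lra.
have hq : q = 0 by move: pq1; rewrite hp; nra.
move: e1 e2; rewrite hp hq /= !mul1r !mul0r subr0 add0r => e1 e2.
by apply: (vertex_not_origin (leq0n N)); lra.
Qed.

Lemma rotation_or_inverse i j : (i <= N.+1)%N -> (j <= N.+1)%N ->
  (Ux j - Ux i) ^+ 2 + (Uy j - Uy i) ^+ 2 = s ^+ 2 ->
  (Ux j = p * Ux i - q * Uy i /\ Uy j = q * Ux i + p * Uy i) \/
  (Ux j = p * Ux i + q * Uy i /\ Uy j = - q * Ux i + p * Uy i).
Proof.
move=> hi hj ch; have [pq1 _] := rotation_pq.
apply: rotation_equal_chord => //; rewrite ?normU ?rho2_neq0 //.
by rewrite ch rotation_chord ?normU.
Qed.

(* All triangles are positively oriented, so [M_(j+2)] cannot be [M_j]. *)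
Lemma no_turning_back j : (j.+1 <= N)%N -> Ux j.+2 = Ux j -> Uy j.+2 = Uy j -> False.
Proof.
case: j => [|j] hj /= ex ey; first by apply: (vertex_not_origin (k := 1)) => //; lra.
have [a2 b2] : a j.+2 = a j /\ b j.+2 = b j by split; lra.
have := crossM_gt0 (ltnW hj : (j < N)%N); have := crossM_gt0 hj.
by rewrite /crossM /cross a2 b2; lra.
Qed.

Lemma rotation_step j : (j <= N)%N ->
  Ux j.+1 = p * Ux j - q * Uy j /\ Uy j.+1 = q * Ux j + p * Uy j.
Proof.
have [pq1 U01] := rotation_pq.
elim: j => [// | j IH] hj; have [ih1 ih2] := IH (ltnW hj).
have [//|[f1 f2]] := rotation_or_inverse (i := j.+1) (j := j.+2) (leqW hj) hj (sideU hj).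
have [g1 g2] := rotationK pq1 (Ux j) (Uy j); rewrite -ih1 -ih2 -f1 -f2 in g1 g2.
by case: (no_turning_back hj g1 g2).
Qed.

Lemma rotation_close :
  Ux 0 = p * Ux N.+1 - q * Uy N.+1 /\ Uy 0 = q * Ux N.+1 + p * Uy N.+1.
Proof.
have [pq1 _] := rotation_pq; have N0 := subn2_gt0 n3.
have ch : (Ux 0 - Ux N.+1) ^+ 2 + (Uy 0 - Uy N.+1) ^+ 2 = s ^+ 2.
  by have [_ <-] := we; rewrite /= -normM; ring.
have [//|[f1 f2]] := rotation_or_inverse (leqnn _) (leq0n _) ch.
have [ih1 ih2] := rotation_step (leqnn N).
have [g1 g2] := rotationK pq1 (Ux N) (Uy N); rewrite -ih1 -ih2 -f1 -f2 in g1 g2.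
have eN : N = N.-1.+1 by rewrite prednK.
move: g1 g2; rewrite [in Ux N]eN [in Uy N]eN /= => g1 g2.
by case: (vertex_not_origin (k := N.-1)) => //; [lia | lra | lra].
Qed.

(* the common distance from [c] to the sides *)
Let d := s * q / (2 * (1 - p)).

Lemma distance_cot dt cr : cr != 0 -> (1 - p) * dt = q * cr -> s * dt / (2 * cr) = d.
Proof.
move=> cr0 e; have {}e : dt = q * cr / (1 - p).
  by rewrite -e; field; exact: rotation_nontrivial.
by rewrite e /d; field; rewrite cr0 rotation_nontrivial.
Qed.

Lemma regular_dA_x k : (k < N)%N -> dA_x w k = d.
Proof.
move=> hk; have [xs _] := we; have [f1 f2] := rotation_step hk.
rewrite dA_xE // xs //; apply: distance_cot; first exact: crossM_neq0.
apply: (inscribed_angle (c1 := c1) (c2 := c2) (u1 := Ux k.+1) (u2 := Uy k.+1) rotation_pq.1).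
- by rewrite normU // ltnW.
- by rewrite /=; ring.
- by rewrite /=; ring.
- by rewrite -f1 /=; ring.
- by rewrite -f2 /=; ring.
Qed.

Lemma regular_dA_l0 : dA_l w 0 = d.
Proof.
have N0 := subn2_gt0 n3; have [_ [f1 f2]] := rotation_pq.
rewrite dA_lE //; apply: distance_cot; first exact: crossM_neq0.
(* the angle at [M_2] opposite [t_1], with the origin moved to [M_2] *)
transitivity ((1 - p) * (- a 1 * (a 0 - a 1) + - b 1 * (b 0 - b 1))); first by ring.
transitivity (q * (- a 1 * (b 0 - b 1) - - b 1 * (a 0 - a 1)));
  last by rewrite /crossM /cross; ring.
apply: (inscribed_angle (c1 := c1 - a 1) (c2 := c2 - b 1) (u1 := Ux 0) (u2 := Uy 0) rotation_pq.1).
- by rewrite normU // -(regular_on_circle N0); ring.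
- by rewrite /=; ring.
- by rewrite /=; ring.
- by rewrite -f1 /=; ring.
- by rewrite -f2 /=; ring.
Qed.

Lemma regular_dA_rN : dA_r w N.-1 = d.
Proof.
have N0 := subn2_gt0 n3; have hN1 : (N.-1 < N)%N by rewrite ltn_predL.
have [_ tN] := we; have [f1 f2] := rotation_close.
rewrite dA_rE // (prednK N0) tN; apply: distance_cot; first exact: crossM_neq0.
(* the angle at [M_(n-2)] opposite [t_(n-1)], with the origin moved there *)
transitivity ((1 - p) * ((a N - a N.-1) * - a N.-1 + (b N - b N.-1) * - b N.-1)); first by ring.
transitivity (q * ((a N - a N.-1) * - b N.-1 - (b N - b N.-1) * - a N.-1));
  last by rewrite /crossM /cross (prednK N0); ring.
apply: (inscribed_angle (c1 := c1 - a N.-1) (c2 := c2 - b N.-1) (u1 := Ux N.+1) (u2 := Uy N.+1)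
  rotation_pq.1).
- by rewrite normU // -(regular_on_circle (ltnW hN1)); ring.
- by rewrite /=; ring.
- by rewrite /=; ring.
- by rewrite -f1 /=; ring.
- by rewrite -f2 /=; ring.
Qed.

Lemma regular_dA_inner k : (0 < k < N)%N -> dA_r w k.-1 + dA_l w k = 0.
Proof.
case: k => [// | k] /= hk.
have := dA_r_dA_l_defect hk (regular_on_circle0 (ltnW (ltnW hk))) (regular_on_circle0 (ltnW hk)).
have := regular_on_circle0 hk; rewrite /on_circle0 => ->; rewrite subrr mulr0.
move/eqP; rewrite mulf_eq0 mulf_eq0 pnatr_eq0 (negbTE (crossM_neq0 hk)) !orbF.
by move/eqP.
Qed.

Lemma regular_critical : critical w N.
Proof.
split; first by move=> k hk; rewrite regular_dA_x ?regular_dA_l0.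
  by rewrite regular_dA_rN regular_dA_l0.
exact: regular_dA_inner.
Qed.

End RegularCritical.

Theorem critical_regular : critical w N <-> regular w.
Proof.
split=> [wC | [we [[c1 c2] [r wc]]]]; last exact: (regular_critical we wc).
by split; [exact: critical_equilateral | exact: critical_inscribable].
Qed.

End OmegaPolygon.

Section DiffRules.
Variables (R : realType) (V : normedModType R).

Lemma is_diff_heron (f g h df dg dh : V -> R) w :
  is_diff w f df -> is_diff w g dg -> is_diff w h dh ->
  is_diff w (fun v => heron (f v) (g v) (h v))
    (fun v => 4 * f w * (g w ^+ 2 + h w ^+ 2 - f w ^+ 2) * df v
            + 4 * g w * (f w ^+ 2 + h w ^+ 2 - g w ^+ 2) * dg v
            + 4 * h w * (f w ^+ 2 + g w ^+ 2 - h w ^+ 2) * dh v).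
Proof.
move=> Hf Hg Hh.
have -> : (fun v => heron (f v) (g v) (h v)) =
    (f + g + h) * (- f + g + h) * (f - g + h) * (f + g - h) by [].
eapply is_diff_eq; first by typeclasses eauto.
by apply/funext => v /=; rewrite !fctE -![_ *: _]/(_ * _); ring.
Qed.

Lemma is_diff_sqrt (h dh : V -> R) w : is_diff w h dh -> 0 < h w ->
  is_diff w (fun v => Num.sqrt (h v)) (fun v => dh v / (2 * Num.sqrt (h w))).
Proof.
move=> Hh hw.
have Hs : is_diff (h w) (@Num.sqrt R) (fun y => y *: (2 * Num.sqrt (h w))^-1).
  have hd : derivable (@Num.sqrt R) (h w) 1 by apply: ex_derive; exact: is_derive1_sqrt.
  apply: DiffDef; first exact/derivable1_diffP.
  by rewrite deriv1E // derive1E derive_sqrt.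
exact: is_diff_eq (is_diff_comp Hh Hs) _.
Qed.

Lemma is_diff_sum K (F dF : nat -> V -> R) w :
  (forall k, (k < K)%N -> is_diff w (F k) (dF k)) ->
  is_diff w (fun v => \sum_(k < K) F k v) (fun v => \sum_(k < K) dF k v).
Proof.
elim: K => [|K IH] H.
  have -> : (fun v => \sum_(k < 0) F k v) = cst 0 by apply/funext => v; rewrite big_ord0.
  eapply is_diff_eq; first by typeclasses eauto.
  by apply/funext => v; rewrite big_ord0.
have -> : (fun v => \sum_(k < K.+1) F k v) = (fun v => \sum_(k < K) F k v) + F K.
  by apply/funext => v; rewrite big_ord_recr.
have H1 := IH (fun k hk => H k (ltnW hk)); have H2 := H K (ltnSn K).
eapply is_diff_eq; first by typeclasses eauto.
by apply/funext => v; rewrite big_ord_recr.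
Qed.

Lemma is_diff_divr (h dh : V -> R) (c : R) w : is_diff w h dh ->
  is_diff w (fun v => h v / c) (fun v => dh v / c).
Proof.
move=> Hh; have -> : (fun v => h v / c) = c^-1 *: h by apply/funext => v; rewrite /= mulrC.
eapply is_diff_eq; first by typeclasses eauto.
by apply/funext => v; rewrite /= mulrC.
Qed.

Lemma linear_surjective (L : {linear V -> R}) v0 : L v0 != 0 -> forall y, exists v, L v = y.
Proof. by move=> L0 y; exists ((y / L v0) *: v0); rewrite linearZ; exact: divfK. Qed.

End DiffRules.

Section CoordDiff.
Variables (R : realType) (m : nat).
Local Notation V := 'rV[R]_m.

Lemma coord_linear j : linear (fun v : V => Defs.coord v j).
Proof.
move=> a u v; rewrite /Defs.coord.
by case: insubP => [i _ _|_]; rewrite ?mxE //= ?mulr0 ?scaler0 addr0.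
Qed.

Lemma is_diff_coord j (w : V) :
  is_diff w (fun v : V => Defs.coord v j) (fun v => Defs.coord v j).
Proof.
pose cL : {linear V -> R} :=
  HB.pack (fun v : V => Defs.coord v j) (GRing.isLinear.Build _ _ _ _ _ (coord_linear j)).
have cont : continuous cL.
  rewrite /cL /= /Defs.coord.
  by case: insubP => [i _ _|_]; [exact: coord_continuous | exact: cst_continuous].
rewrite (_ : (fun v => _) = cL) //; apply: DiffDef; first exact: linear_differentiable.
by rewrite diff_lin.
Qed.

End CoordDiff.

Section PsiDiff.
Variables (R : realType) (n : nat).
Local Notation m := (2 * n - 3)%N.
Local Notation V := 'rV[R]_m.

Lemma is_diff_perim (w : V) : is_diff w (@perim R n) (@perim R n).
Proof.
have H0 := is_diff_coord (2 * 0) w; have HN := is_diff_coord (2 * (n - 2)) w.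
have HS := @is_diff_sum _ _ (n - 2) (fun k v => xx v k) (fun k v => xx v k) w
  (fun k _ => is_diff_coord _ w).
have -> : @perim R n = (fun v => tt v 0) + (fun v => \sum_(k < n - 2) xx v k) +
  (fun v => tt v (n - 2)) by [].
exact: (is_diffD (is_diffD H0 HS) HN).
Qed.

Definition darea (w v : V) : R :=
  \sum_(k < n - 2) (dA_l w k * tt v k + dA_x w k * xx v k + dA_r w k * tt v k.+1).

Lemma is_diff_triangle_area (w : V) k : inV (tt w k) (xx w k) (tt w k.+1) ->
  is_diff w (fun v : V => Num.sqrt (heron (tt v k) (xx v k) (tt v k.+1)) / 4)
    (fun v => dA_l w k * tt v k + dA_x w k * xx v k + dA_r w k * tt v k.+1).
Proof.
move=> wk; have hH := heron_gt0 wk.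
apply: is_diff_eq (is_diff_divr 4 (is_diff_sqrt (is_diff_heron (is_diff_coord (2 * k) w)
  (is_diff_coord (2 * k).+1 w) (is_diff_coord (2 * k.+1) w)) hH)) _.
apply/funext => v.
have S0 : sqrt_heron w k != 0 by rewrite lt0r_neq0 // sqrtr_gt0.
move: S0; rewrite /dA_l /dA_x /dA_r /sqrt_heron /tt /xx => S0.
by field.
Qed.

Lemma is_diff_area (w : V) : Omega w -> is_diff w (@area R n) (darea w).
Proof.
case=> _ [wV _].
apply: (@is_diff_sum _ _ _ (fun k v => Num.sqrt (heron (tt v k) (xx v k) (tt v k.+1)) / 4)
  (fun k v => dA_l w k * tt v k + dA_x w k * xx v k + dA_r w k * tt v k.+1)).
by move=> k hk; apply/is_diff_triangle_area/wV.
Qed.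

Definition dPsi (w v : V) : 'rV[R]_2 := perim v *: delta_mx 0 0 + darea w v *: delta_mx 0 1.

Lemma is_diff_Psi (w : V) : Omega w -> is_diff w (@Psi R n) (dPsi w).
Proof.
move=> wO; have Hp := is_diff_perim w; have Ha := is_diff_area wO.
have -> : @Psi R n = (fun v => perim v *: delta_mx 0 0) + (fun v => area v *: delta_mx 0 1).
  apply/funext => v; apply/matrixP => i j; rewrite /Psi !mxE [i]ord1.
  by case: j => -[|[|//]] hj; rewrite /= ?mulr1 ?mulr0 ?addr0 ?add0r.
have He0 := is_diff_comp Hp (is_diff_scalel (perim w) (delta_mx 0 0 : 'rV[R]_2)).
have He1 := is_diff_comp Ha (is_diff_scalel (area w) (delta_mx 0 1 : 'rV[R]_2)).
exact: is_diffD He0 He1.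
Qed.

Lemma jacobian_PsiE (w : V) (i : 'I_m) : Omega w ->
  'J (@Psi R n) w i 0 = perim (delta_mx 0 i : V) /\
  'J (@Psi R n) w i 1 = darea w (delta_mx 0 i).
Proof.
move/is_diff_Psi => HP; rewrite /jacobian diff_val !mxE /=.
by rewrite mulr1 mulr0 addr0 mulr0 mulr1 add0r.
Qed.

End PsiDiff.

Lemma det_mx2 (R : comRingType) (M : 'M[R]_2) : \det M = M 0 0 * M 1 1 - M 0 1 * M 1 0.
Proof.
rewrite (expand_det_row M 0) big_ord_recl big_ord1 /cofactor !det_mx11 !mxE /=.
have -> : lift 0 (0 : 'I_1) = 1 :> 'I_2 by apply/val_inj.
have -> : lift 1 (0 : 'I_1) = 0 :> 'I_2 by apply/val_inj.
by rewrite expr0 expr1 mul1r mulN1r mulrN.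
Qed.

Lemma mxrank_two_columns (F : fieldType) m (J : 'M[F]_(m, 2)) (i0 : 'I_m) : J i0 0 = 1 ->
  \rank J = if [forall i, J i 1 == J i0 1 * J i 0] then 1%N else 2%N.
Proof.
move=> J0; case: forallP => [J1 | J1].
  have eJ : J = col 0 J *m row i0 J.
    apply/matrixP => i k; rewrite !mxE big_ord1 !mxE.
    case: k => -[|[|//]] hk.
      by rewrite (_ : Ordinal hk = 0); [rewrite J0 mulr1 | apply/val_inj].
    by rewrite (_ : Ordinal hk = 1); [rewrite (eqP (J1 i)) mulrC | apply/val_inj].
  apply/eqP; rewrite eqn_leq {1}eJ mulmx_max_rank lt0n mxrank_eq0.
  by apply/eqP => J00; move: J0; rewrite J00 mxE => /eqP; rewrite eq_sym oner_eq0.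
have /existsP[j Jj] : [exists i, J i 1 != J i0 1 * J i 0].
  by rewrite -negb_forall; apply/forallP.
pose f (k : 'I_2) := if k == 0 then i0 else j.
apply/eqP; rewrite eqn_leq rank_leq_col /=.
have rk2 : \rank (rowsub f J) = 2%N.
  by apply: mxrank_unit; rewrite unitmxE det_mx2 !mxE /f /= J0 mul1r unitfE subr_eq0.
by rewrite -[X in (X <= _)%N]rk2 mxrankS // rowsub_sub.
Qed.

Lemma ord_odd_even m (i : 'I_m) :
  (exists k (h : ((2 * k).+1 < m)%N), i = Ordinal h) \/
  (exists k (h : (2 * k < m)%N), i = Ordinal h).
Proof.
have := odd_double_half i; rewrite -mul2n; have := ltn_ord i.
case: (odd i) => /= im ie; [left | right]; exists i./2.
  have h : ((2 * i./2).+1 < m)%N by lia.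
  by exists h; apply/val_inj => /=; lia.
have h : (2 * i./2 < m)%N by lia.
by exists h; apply/val_inj => /=; lia.
Qed.

Section BasisEvaluation.
Variables (R : realType) (n : nat).
Hypothesis n3 : (3 <= n)%N.
Local Notation N := (n - 2)%N.
Local Notation m := (2 * n - 3)%N.
Local Notation V := 'rV[R]_m.
Local Notation e i := (delta_mx 0 i : V).
Variable w : V.

Lemma coord_delta (i : 'I_m) j : Defs.coord (e i) j = (i == j :> nat)%:R.
Proof.
rewrite /Defs.coord; case: insubP => [i' _ <- | jm]; first by rewrite mxE /= eq_sym.
by rewrite (_ : (i == j :> nat) = false) //; apply: contraNF jm => /eqP <-.
Qed.

Lemma darea_delta (i : 'I_m) : darea w (e i) =
  \sum_(k < N) (dA_l w k * (i == (2 * k)%N :> nat)%:R +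
    dA_x w k * (i == (2 * k).+1 :> nat)%:R + dA_r w k * (i == (2 * k.+1)%N :> nat)%:R).
Proof. by apply: eq_bigr => k _; rewrite /tt /xx !coord_delta. Qed.

Lemma delta_odd k (h : ((2 * k).+1 < m)%N) :
  perim (e (Ordinal h)) = 1 /\ darea w (e (Ordinal h)) = dA_x w k.
Proof.
have kN : (k < N)%N by lia.
split.
  rewrite /perim /tt /xx !coord_delta (big_only1 (Ordinal kN)) //=.
    by rewrite coord_delta /= eqxx; do ?[case: eqP => [|_]; first lia]; rewrite ?addr0 ?add0r.
  by move=> j; rewrite -val_eqE /= => jk _; rewrite coord_delta /=; case: eqP => //; lia.
rewrite darea_delta (big_only1 (Ordinal kN)) //=.
  by rewrite eqxx; do ?[case: eqP => [|_]; first lia]; rewrite ?mulr0 ?mulr1 ?addr0 ?add0r.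
move=> j; rewrite -val_eqE /= => jk _.
by do ?[case: eqP => [|_]; first lia]; rewrite ?mulr0 ?addr0.
Qed.

Lemma delta_even k (h : (2 * k < m)%N) :
  perim (e (Ordinal h)) = ((k == 0) || (k == N))%:R /\
  darea w (e (Ordinal h)) =
    (if (k < N)%N then dA_l w k else 0) + (if (0 < k)%N then dA_r w k.-1 else 0).
Proof.
have N0 := subn2_gt0 n3; split.
  rewrite /perim /tt /xx !coord_delta /= big1 => [|j _]; last first.
    by rewrite coord_delta /=; case: eqP => //; lia.
  rewrite addr0 -natrD; congr _%:R.
  by do ![case: eqP => ?] => //=; lia.
rewrite darea_delta big_split big_split /= [X in _ + X + _]big1 => [|j _]; last first.
  by case: eqP => [?|_]; [exfalso; lia | rewrite mulr0].
rewrite addr0; congr (_ + _).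
  case: ltnP => kN; last first.
    rewrite big1 // => j _; have := ltn_ord j.
    by case: eqP => [? ?|_ _]; [exfalso; lia | rewrite mulr0].
  rewrite (big_only1 (Ordinal kN)) //= ?eqxx ?mulr1 // => j.
  by rewrite -val_eqE /= => jk _; case: eqP => [?|_]; [exfalso; lia | rewrite mulr0].
case: posnP => k0.
  rewrite big1 // => j _; have := ltn_ord j.
  by case: eqP => [? ?|_ _]; [exfalso; lia | rewrite mulr0].
have k1N : (k.-1 < N)%N by lia.
rewrite (big_only1 (Ordinal k1N)) //= ?prednK ?eqxx ?mulr1 // => j.
by rewrite -val_eqE /= => jk _; case: eqP => [?|_]; [exfalso; lia | rewrite mulr0].
Qed.

Lemma critical_proportional (h0 : (0 < m)%N) :
  critical w N <-> forall i : 'I_m, darea w (e i) = darea w (e (Ordinal h0)) * perim (e i).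
Proof.
have N0 := subn2_gt0 n3.
have [_] := delta_even (k := 0) h0; rewrite N0 /= addr0 => ->.
split=> [[wx wr wi] i | H].
  have [[k [h ->]] | [k [h ->]]] := ord_odd_even i.
    by have [-> ->] := delta_odd h; rewrite mulr1 wx //; lia.
  have [-> ->] := delta_even h; have kN : (k <= N)%N by lia.
  case: posnP => [k0 | k0]; first by rewrite k0 N0 /= addr0 mulr1.
  case: ltnP => kN' /=; last first.
    by rewrite (_ : k = N) ?eqxx ?orbT ?add0r ?mulr1 //; lia.
  by rewrite (_ : (k == N) = false) ?mulr0 1?addrC ?wi ?k0 ?kN' //; lia.
split.
- move=> k kN; have h : ((2 * k).+1 < m)%N by lia.
  by have := H (Ordinal h); have [-> ->] := delta_odd h; rewrite mulr1.
- have h : (2 * N < m)%N by lia.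
  by have := H (Ordinal h); have [-> ->] := delta_even h; rewrite ltnn N0 eqxx orbT add0r mulr1.
- move=> k /andP[k0 kN]; have h : (2 * k < m)%N by lia.
  have := H (Ordinal h); have [-> ->] := delta_even h; rewrite kN k0 addrC => ->.
  by rewrite (_ : (k == 0) || (k == N) = false) ?mulr0 //; lia.
Qed.

Lemma perim_submersion :
  differentiable (@perim R n) w /\ forall y : R, exists v, 'd (@perim R n) w v = y.
Proof.
have Hp := is_diff_perim w; have h0 : (0 < m)%N by lia.
split; first exact: ex_diff.
apply: (linear_surjective (v0 := e (Ordinal h0))).
by rewrite diff_val; have [-> _] := delta_even (k := 0) h0; exact: oner_neq0.
Qed.

Lemma area_submersion : Omega w ->
  differentiable (@area R n) w /\ forall y : R, exists v, 'd (@area R n) w v = y.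
Proof.
move=> wO; have Ha := is_diff_area wO; have h0 : (0 < m)%N by lia.
have h1 : ((2 * 0).+1 < m)%N by lia.
split; first exact: ex_diff.
have [l0 | x0] := dA_l_or_dA_x_neq0 n3 wO.
  apply: (linear_surjective (v0 := e (Ordinal h0))).
  by rewrite diff_val; have [_ ->] := delta_even (k := 0) h0; rewrite subn2_gt0 // addr0.
apply: (linear_surjective (v0 := e (Ordinal h1))).
by rewrite diff_val; have [_ ->] := delta_odd h1.
Qed.

Lemma rank_jacobian_Psi : Omega w ->
  \rank ('J (@Psi R n) w) = (if `[< regular w >] then 1 else 2)%N.
Proof.
move=> wO; have h0 : (0 < m)%N by lia.
have J0 i : 'J (@Psi R n) w i 0 = perim (e i) := (jacobian_PsiE i wO).1.
have J1 i : 'J (@Psi R n) w i 1 = darea w (e i) := (jacobian_PsiE i wO).2.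
rewrite (mxrank_two_columns (i0 := Ordinal h0)); last first.
  by rewrite J0; have [-> _] := delta_even (k := 0) h0.
congr (if _ then _ else _); apply/forallP/asboolP => [H | ].
  by apply/(critical_regular n3 wO)/(critical_proportional h0) => i; apply/eqP; rewrite -!J0 -!J1.
by move=> /(critical_regular n3 wO)/(critical_proportional h0) H i; rewrite !J0 !J1 H.
Qed.

End BasisEvaluation.

Section Continuity.
Variables (R : realType) (m : nat).
Local Notation V := 'rV[R]_m.
Variable w : V.

Lemma continuous_sum_ord K (F : nat -> V -> R) :
  (forall k, (k < K)%N -> {for w, continuous (F k)}) ->
  {for w, continuous (fun v => \sum_(k < K) F k v)}.
Proof.
elim: K => [|K IH] cF; rewrite /prop_for.
  have -> : (fun v => \sum_(k < 0) F k v) = cst 0 by apply/funext => v; rewrite big_ord0.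
  exact: cst_continuous.
have -> : (fun v => \sum_(k < K.+1) F k v) = (fun v => \sum_(k < K) F k v) + F K.
  by apply/funext => v; rewrite big_ord_recr.
by apply: continuousD; [apply: IH => k kK; apply: cF; exact: ltnW | exact: cF].
Qed.

Lemma near_inV (f g h : V -> R) : {for w, continuous f} -> {for w, continuous g} ->
  {for w, continuous h} -> inV (f w) (g w) (h w) -> \forall v \near w, inV (f v) (g v) (h v).
Proof.
move=> cf cg ch [[f0 f1] [[g0 g1] [h0 h1]]].
have pos (u : V -> R) : {for w, continuous u} -> 0 < u w -> \forall v \near w, 0 < u v.
  by move=> cu u0; exact: cvgr_gt cu _ u0.
have gh := continuousD cg ch; have fh := continuousD cf ch; have fg := continuousD cf cg.
near=> v.
have F0 : 0 < f v by near: v; exact: pos.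
have G0 : 0 < g v by near: v; exact: pos.
have H0 : 0 < h v by near: v; exact: pos.
have F1 : 0 < g v + h v - f v.
  by near: v; apply: (pos (fun v => g v + h v - f v)); [exact: continuousB gh cf | lra].
have G1 : 0 < f v + h v - g v.
  by near: v; apply: (pos (fun v => f v + h v - g v)); [exact: continuousB fh cg | lra].
have H1 : 0 < f v + g v - h v.
  by near: v; apply: (pos (fun v => f v + g v - h v)); [exact: continuousB fg ch | lra].
by split; [|split]; split; lra.
Unshelve. all: by end_near.
Qed.

Lemma near_neq (f g : V -> R) : {for w, continuous f} -> {for w, continuous g} ->
  f w != g w -> \forall v \near w, f v != g v.
Proof.
move=> cf cg; rewrite -subr_eq0 => fg.
by apply: filterS (cvgr_neq0 _ (continuousB cf cg) fg) => v; rewrite subr_eq0.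
Qed.

Lemma continuous_tt k : {for w, continuous (fun v : V => tt v k)}.
Proof. exact: differentiable_continuous (@ex_diff _ _ _ _ _ _ _ (is_diff_coord _ w)). Qed.

Lemma continuous_xx k : {for w, continuous (fun v : V => xx v k)}.
Proof. exact: differentiable_continuous (@ex_diff _ _ _ _ _ _ _ (is_diff_coord _ w)). Qed.

Section AtTriangle.
Variable k : nat.
Hypothesis wk : inV (tt w k) (xx w k) (tt w k.+1).

Let sq (f : V -> R) : {for w, continuous f} -> {for w, continuous (fun v => f v ^+ 2)}.
Proof. by move=> cf; exact: continuous_comp cf (@exprn_continuous R 2 _). Qed.

Lemma continuous_over_sqrt_heron (f : V -> R) : {for w, continuous f} ->
  {for w, continuous (fun v => f v / (2 * sqrt_heron v k))}.
Proof.
move=> cf; apply: continuousM => //; apply: continuousV.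
  by rewrite mulf_neq0 ?pnatr_eq0 // lt0r_neq0 // sqrtr_gt0 heron_gt0.
apply: continuousM; first exact: cst_continuous.
have Hh := is_diff_heron (is_diff_coord (2 * k) w) (is_diff_coord (2 * k).+1 w)
  (is_diff_coord (2 * k.+1) w).
exact: differentiable_continuous (@ex_diff _ _ _ _ _ _ _ (is_diff_sqrt Hh (heron_gt0 wk))).
Qed.

Lemma continuous_dA_x : {for w, continuous (fun v => dA_x v k)}.
Proof.
rewrite /dA_x; apply: continuous_over_sqrt_heron; apply: continuousM; first exact: continuous_xx.
by apply: continuousB; [apply: continuousD|]; apply: sq;
  [exact: continuous_tt .. | exact: continuous_xx].
Qed.

Lemma continuous_dA_l : {for w, continuous (fun v => dA_l v k)}.
Proof.
rewrite /dA_l; apply: continuous_over_sqrt_heron; apply: continuousM; first exact: continuous_tt.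
by apply: continuousB; [apply: continuousD|]; apply: sq;
  [exact: continuous_xx | exact: continuous_tt ..].
Qed.

Lemma continuous_dA_r : {for w, continuous (fun v => dA_r v k)}.
Proof.
rewrite /dA_r; apply: continuous_over_sqrt_heron; apply: continuousM; first exact: continuous_tt.
by apply: continuousB; [apply: continuousD|]; apply: sq;
  [exact: continuous_tt | exact: continuous_xx | exact: continuous_tt].
Qed.

Lemma continuous_alpha : {for w, continuous (fun v => alpha (tt v k) (xx v k) (tt v k.+1))}.
Proof.
have [[t0 _] [_ [s0 _]]] := wk.
have cE : {for w, continuous (fun v =>
    (tt v k ^+ 2 + tt v k.+1 ^+ 2 - xx v k ^+ 2) / (2 * tt v k * tt v k.+1))}.
  apply: continuousM.
    by apply: continuousB; [apply: continuousD|]; apply: sq;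
      [exact: continuous_tt .. | exact: continuous_xx].
  apply: continuousV; first by rewrite !mulf_neq0 ?pnatr_eq0 ?lt0r_neq0.
  by apply: continuousM; [apply: continuousM; [exact: cst_continuous|] |]; exact: continuous_tt.
exact: continuous_comp cE (continuous_acos (cos_law_bound wk)).
Qed.

End AtTriangle.
End Continuity.

Section Openness.
Variables (R : realType) (n : nat).
Hypothesis n3 : (3 <= n)%N.
Local Notation N := (n - 2)%N.
Local Notation m := (2 * n - 3)%N.
Local Notation V := 'rV[R]_m.

Lemma continuous_darea (w u : V) : Omega w -> {for w, continuous (fun v => darea v u)}.
Proof.
move=> wO; apply: (continuous_sum_ord (F := fun k v =>
  dA_l v k * tt u k + dA_x v k * xx u k + dA_r v k * tt u k.+1)) => k kN.
have wk := Omega_inV wO kN.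
by apply: continuousD; [apply: continuousD|]; apply: continuousM; try exact: cst_continuous;
  [exact: continuous_dA_l | exact: continuous_dA_x | exact: continuous_dA_r].
Qed.

Lemma Omega_near (w : V) : Omega w -> \forall v \near w, Omega v.
Proof.
move=> wO; have [wpos [wV wsum]] := wO.
have tri (k : 'I_N) : \forall v \near w, inV (tt v k) (xx v k) (tt v k.+1).
  by apply: near_inV; [exact: continuous_tt | exact: continuous_xx | exact: continuous_tt |
    exact: wV].
have csum : {for w, continuous (fun v => \sum_(k < N) alpha (tt v k) (xx v k) (tt v k.+1))}.
  apply: (continuous_sum_ord (F := fun k v => alpha (tt v k) (xx v k) (tt v k.+1))) => k kN.
  exact: continuous_alpha (wV k kN).
near=> v; split; [|split].
- near: v; apply: filter_forall => i.
  by apply: (cvgr_gt (w ord0 i)); [exact: coord_continuous | exact: wpos].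
- have : forall k : 'I_N, inV (tt v k) (xx v k) (tt v k.+1) by near: v; exact: filter_forall.
  by move=> H k kN; exact: H (Ordinal kN).
- by near: v; exact: cvgr_lt csum _ wsum.
Unshelve. all: by end_near.
Qed.

Lemma not_critical_near (w : V) : Omega w -> ~ critical w N -> \forall v \near w, ~ critical v N.
Proof.
move=> wO; have h0 : (0 < m)%N by lia.
rewrite (critical_proportional n3 w h0) => /existsNP[i /eqP wi].
have ci := continuous_darea (u := delta_mx 0 i) wO.
have c0 := continuous_darea (u := delta_mx 0 (Ordinal h0)) wO.
have cg : {for w, continuous (fun v =>
    darea v (delta_mx 0 (Ordinal h0)) * perim (delta_mx 0 i : V))}.
  by apply: continuousM => //; exact: cst_continuous.
apply: filterS (near_neq ci cg wi) => v /eqP vi.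
by rewrite (critical_proportional n3 v h0) => /(_ i).
Qed.

Lemma open_nonregular : open [set w : V | Omega w /\ ~ regular w].
Proof.
rewrite openE => w [wO wR]; have wC : ~ critical w N by move/(critical_regular n3 wO).
near=> v.
have vO : Omega v by near: v; exact: Omega_near.
have vC : ~ critical v N by near: v; exact: not_critical_near.
by split=> // /(critical_regular n3 vO).
Unshelve. all: by end_near.
Qed.

End Openness.

Theorem theorem3p2 (R : realType) (n : nat) (hn : (3 <= n)%N) :
  (* (1) p and A are submersions on Omega_n *)
  (forall w : 'rV[R]_(2 * n - 3), Omega w ->
     (differentiable (@perim R n) w /\ forall y : R, exists v, 'd (@perim R n) w v = y) /\
     (differentiable (@area R n) w /\ forall y : R, exists v, 'd (@area R n) w v = y)) /\
  (* (2) rank of dPsi is 1 at regular polygons and 2 otherwise *)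
  (forall w : 'rV[R]_(2 * n - 3), Omega w ->
     differentiable (@Psi R n) w /\
     \rank ('J (@Psi R n) w) = (if `[< regular w >] then 1 else 2)%N) /\
  (* the set of non-regular configurations is open *)
  open [set w : 'rV[R]_(2 * n - 3) | Omega w /\ ~ regular w].
Proof.
split; [|split].
- by move=> w wO; split; [apply: perim_submersion | apply: area_submersion].
- move=> w wO; split; last by apply: rank_jacobian_Psi.
  exact: (@ex_diff _ _ _ _ _ _ _ (is_diff_Psi wO)).
- by apply: open_nonregular.
Qed.
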